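(* Let $n,d\ge 2$ be integers with $d\ne 3$, let $\mathbf a=(0,\dots,0,1,d-1)\in V(n,d)$ and $\Gamma=V(n,d)\setminus\{\mathbf a\}$. Let $x,y,z\in\Gamma$. If the chains $(x,y)$, $(y,z)$ and $(x,z)$ are minimal, then the chain $(x,y,z)$ is minimal.
   Context: $V(n,d)=\{\mathbf b\in\mathbb N^n:\sum_i b_i=d\}$. Order $V(n,d)$ lexicographically: $b<c$ iff the first nonzero coordinate of $c-b$ is positive (so $(0,\dots,0,d)$ is the smallest element). For $k\ge1$, a chain of length $k$ is a tuple $(u^1,\dots,u^k)\in V(n,d)^k$ (its links); its $\mathbf a$-degree is the number of indices $j$ with $u^j=\mathbf a$. Two chains of length $k$ with the same sum $u^1+\cdots+u^k$ are compared as follows: $(u^1,\dots,u^k)<(w^1,\dots,w^k)$ iff either the $\mathbf a$-degree of $u$ is smaller than that of $w$, or they have the same $\mathbf a$-degree and $(u^1,\dots,u^k)$ is lexicographically smaller than $(w^1,\dots,w^k)$ (comparing $u^1$ with $w^1$ first, using the order on $V(n,d)$). A chain $(u^1,\dots,u^k)$ is minimal if it is the smallest among all chains $(w^1,\dots,w^k)\in V(n,d)^k$ with $\sum_j w^j=\sum_j u^j$. *)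

From mathcomp Require Import all_boot.
Set Implicit Arguments. Unset Strict Implicit. Unset Printing Implicit Defensive.

Definition vec (n : nat) := {ffun 'I_n -> nat}.

Definition inV (n d : nat) (b : vec n) : Prop := \sum_(i < n) b i = d.

Definition vlt (n : nat) (b c : vec n) : Prop :=
  exists i : 'I_n, (forall j : 'I_n, (j < i)%N -> b j = c j) /\ (b i < c i)%N.

Definition avec (n d : nat) : vec n :=
  [ffun i : 'I_n => if (i == n.-2 :> nat) then 1 else
                    if (i == n.-1 :> nat) then d.-1 else 0].

Definition is_chain (n d k : nat) (u : seq (vec n)) : Prop :=
  size u = k /\ forall x, x \in u -> inV d x.

Definition chain_sum (n : nat) (u : seq (vec n)) : vec n :=
  [ffun i => \sum_(x <- u) x i].

Definition adeg (n : nat) (a : vec n) (u : seq (vec n)) : nat := count_mem a u.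

Fixpoint seqlt (n : nat) (u w : seq (vec n)) : Prop :=
  match u, w with
  | x :: u', y :: w' => vlt x y \/ (x = y /\ seqlt u' w')
  | _, _ => False
  end.

Definition chain_lt (n : nat) (a : vec n) (u w : seq (vec n)) : Prop :=
  (adeg a u < adeg a w)%N \/ (adeg a u = adeg a w /\ seqlt u w).

Definition minimal_chain (n d : nat) (u : seq (vec n)) : Prop :=
  is_chain d (size u) u /\
  forall w, is_chain d (size u) w -> chain_sum w = chain_sum u ->
    w = u \/ chain_lt (avec n d) u w.

From mathcomp Require Import all_boot zify.
Set Implicit Arguments. Unset Strict Implicit. Unset Printing Implicit Defensive.

(* Since x, y, z avoid a, a competitor (w1, w2, w3) containing a has larger
   a-degree, so only a-free competitors matter; if w1 = x the comparison is the
   minimality of (y, z), hence the point is that w1 < x is impossible.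
   Let i be the first coordinate where w1 < x.  As both sum to d, w1 exceeds x
   at some j > i, so y_j > 0 or z_j > 0.  In a minimal pair (x, t) with x_i > 0,
   t_j > 0 and i < j, moving a unit from x_i to t_j yields a smaller pair unless
   x - e_i + e_j = a.  This pins down x, puts j among the last two coordinates,
   makes w1 vanish below them, and gives x_j + 2 <= w1_j <= x_j + y_j + z_j.
   If y_j >= 2 or z_j >= 2, moving that mass into x gives a smaller pair again;
   otherwise y_j = z_j = 1, and the same shift argument on (y, z) gives
   a_j = 2, which is false for a = (0,...,0,1,d-1) when d <> 3. *)

Lemma ord_ltn_eqF n (k l : 'I_n) : k < l -> (k == l) = false.
Proof. by move=> kl; rewrite -val_eqE ltn_eqF. Qed.

Section LexOrder.
Variable n : nat.
Implicit Types (b c : vec n) (u w : seq (vec n)).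

Lemma vlt_irr b : ~ vlt b b.
Proof. by case=> i [_]; rewrite ltnn. Qed.

Lemma vlt_asym b c : vlt b c -> ~ vlt c b.
Proof.
case=> i [agree lt] [i' [agree' lt']].
case: (ltngtP i i') => [ii'|i'i|/val_inj eii'].
- by move: (agree' i ii'); lia.
- by move: (agree i' i'i); lia.
- by move: lt'; rewrite -eii'; lia.
Qed.

Lemma vlt_total b c : b <> c -> vlt b c \/ vlt c b.
Proof.
move=> neq; have [k0 bk0] : exists k, b k != c k.
  case: (boolP [exists k, b k != c k]) => [/existsP // | /existsPn diff].
  by case: neq; apply/ffunP => k; apply/eqP/negPn/diff.
case: (@arg_minnP _ k0 (fun k => b k != c k) val bk0) => i bi i_min.
have agree (j : 'I_n) : j < i -> b j = c j.
  by move=> ji; apply/eqP; apply: contraTT ji => /i_min; rewrite -leqNgt.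
case: (ltngtP (b i) (c i)) => [lt|gt|eq]; last by rewrite eq eqxx in bi.
- by left; exists i.
- by right; exists i; split=> // j /agree.
Qed.

Lemma seqlt_asym u w : seqlt u w -> ~ seqlt w u.
Proof.
elim: u w => [|x u IHu] [|y w] //= [xy|[exy uw]] [yx|[eyx wu]].
- exact: vlt_asym xy yx.
- by move: xy; rewrite eyx; apply: vlt_irr.
- by move: yx; rewrite exy; apply: vlt_irr.
- exact: IHu uw wu.
Qed.

Lemma seqlt_total u w : size u = size w -> u <> w -> seqlt u w \/ seqlt w u.
Proof.
elim: u w => [|x u IHu] [|y w] //= [sz] neq.
case: (eqVneq x y) => [exy|/eqP nxy]; last by case: (vlt_total nxy); auto.
have neq' : u <> w by move=> euw; apply: neq; rewrite exy euw.
by case: (IHu w sz neq'); auto.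
Qed.

End LexOrder.

Section Minimal.
Variables n d : nat.
Local Notation a := (avec n d).
Implicit Types (p q t v x : vec n) (u w : seq (vec n)).

Lemma chain_sum_cons v u k : chain_sum (v :: u) k = v k + chain_sum u k.
Proof. by rewrite !ffunE big_cons. Qed.

Lemma sum_exchange (p q x t : 'I_n -> nat) :
  (forall k, p k + q k = x k + t k) ->
  \sum_(k < n) p k + \sum_(k < n) q k = \sum_(k < n) x k + \sum_(k < n) t k.
Proof. by move=> pq; rewrite -!big_split; apply: eq_bigr => k _. Qed.

Lemma inV_exchange x t p q : inV d x -> inV d t -> inV d p ->
  (forall k, p k + q k = x k + t k) -> inV d q.
Proof. by move=> hx ht hp /sum_exchange; rewrite hx ht hp => /addnI. Qed.

Lemma inV_shift v (i j : 'I_n) : inV d v -> 0 < v i ->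
  inV d [ffun k => v k + (k == j) - (k == i)].
Proof.
move=> hv vi; rewrite /inV.
have /sum_exchange : forall k : 'I_n,
    (k == i : nat) + [ffun k => v k + (k == j) - (k == i)] k = v k + (k == j).
  by move=> k; rewrite ffunE; case: (k == j); case: (eqVneq k i) => [->|_] /=; lia.
by rewrite hv -!big_mkcond /= !big_pred1_eq add1n addn1 => -[].
Qed.

Lemma exists_gt v x (i : 'I_n) : inV d v -> inV d x ->
  (forall k : 'I_n, k < i -> v k = x k) -> v i < x i ->
  exists2 j : 'I_n, i < j & x j < v j.
Proof.
move=> hv hx agree lt.
case: (boolP [exists j : 'I_n, (i < j) && (x j < v j)]) =>
  [/existsP[j /andP[ij xv]] | /existsPn le]; first by exists j.
have: \sum_k v k < \sum_k x k.
  rewrite (bigD1 i) //= [X in _ < X](bigD1 i) //= -addSn leq_add //.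
  apply: leq_sum => k ki; case: (ltngtP k i) => [ki'|ik|/val_inj eki].
  - by rewrite agree.
  - by move: (le k); rewrite ik /= -leqNgt.
  - by rewrite eki eqxx in ki.
by rewrite hv hx ltnn.
Qed.

Lemma minimal_chain_lexmin u w : minimal_chain d u -> is_chain d (size u) w ->
  chain_sum w = chain_sum u -> a \notin w -> ~ seqlt w u.
Proof.
move=> [_ minu] chw sw /count_memPn aw ltwu.
case: (minu w chw sw) => [ewu|[|[_ ltuw]]].
- by move: ltwu; rewrite ewu => /[dup]; apply: seqlt_asym.
- by rewrite /adeg aw.
- exact: seqlt_asym ltuw ltwu.
Qed.

Lemma minimal_chain_cons x u : inV d x -> a \notin x :: u -> minimal_chain d u ->
  (forall v w, is_chain d (size u).+1 (v :: w) -> chain_sum (v :: w) = chain_sum (x :: u) ->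
     a \notin v :: w -> ~ vlt v x) ->
  minimal_chain d (x :: u).
Proof.
move=> hx xu_free mu head; have [[_ in_u] _] := mu.
split=> [|w chw sw]; first by split=> // v; rewrite inE => /orP[/eqP -> | /in_u].
have [size_w in_w] := chw; case: w size_w in_w chw sw => [|v w] // [size_w] in_w chw sw.
case: (posnP (adeg a (v :: w))) => [w0|];
  last by right; left; rewrite /adeg (count_memPn xu_free).
have vw_free : a \notin v :: w by apply/count_memPn.
case: (eqVneq (x :: u) (v :: w)) => [<- | /eqP neq]; first by left.
right; right; split; first by rewrite w0; apply/count_memPn.
have [// | /= [vx | [evx tail]]] :=
  seqlt_total (u := x :: u) (w := v :: w) (congr1 S (esym size_w)) neq; exfalso.
- exact: head chw sw vw_free vx.
- apply: (minimal_chain_lexmin (w := w) mu _ _ _ tail).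
  + by split=> // v' v'w; apply: in_w; rewrite inE v'w orbT.
  + apply/ffunP => k; have := congr1 (fun f : vec n => f k) sw.
    by rewrite /= !chain_sum_cons evx => /addnI.
  + by move: vw_free; rewrite inE negb_or => /andP[_].
Qed.

Lemma minimal2_inV x t : minimal_chain d [:: x; t] -> inV d x /\ inV d t.
Proof. by case=> -[_ inxt] _; split; apply: inxt; rewrite !inE eqxx ?orbT. Qed.

Lemma minimal2_exchange x t p q : minimal_chain d [:: x; t] ->
  inV d p -> p <> a -> q <> a -> (forall k, p k + q k = x k + t k) -> ~ vlt p x.
Proof.
move=> mxt hp pa qa pq ltpx; have [hx ht] := minimal2_inV mxt.
have hq : inV d q := inV_exchange hx ht hp pq.
apply: (minimal_chain_lexmin (w := [:: p; q]) mxt); last by left.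
- by split=> // v; rewrite !inE => /orP[]/eqP->.
- by apply/ffunP => k; rewrite !chain_sum_cons addnA pq -addnA.
- by rewrite !inE; apply/norP; split; apply/eqP => /esym.
Qed.

Lemma minimal2_sorted x t : minimal_chain d [:: x; t] -> x <> a -> t <> a ->
  ~ vlt t x.
Proof.
move=> mxt xa ta; have [_ ht] := minimal2_inV mxt.
exact: (minimal2_exchange mxt ht ta xa (fun k => addnC _ _)).
Qed.

Lemma minimal2_exchange_tail x t p (i : 'I_n) : minimal_chain d [:: x; t] ->
  inV d p -> p <> a -> (forall k, p k <= x k + t k) ->
  (forall k : 'I_n, k <= i -> p k = 0) -> (forall k : 'I_n, k < i -> x k = 0) ->
  a i < x i -> False.
Proof.
move=> mxt hp pa ple p0 x0 xi.
apply: (minimal2_exchange mxt hp pa (q := [ffun k => x k + t k - p k])).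
- by move/(congr1 (fun v : vec n => v i)); rewrite ffunE p0 //; lia.
- by move=> k; rewrite ffunE subnKC.
- exists i; split=> [k ki|]; last by rewrite p0 //; lia.
  by rewrite x0 // p0 // ltnW.
Qed.

End Minimal.

Section Tail.
Variables m d : nat.
Local Notation n := m.+2.
Local Notation a := (avec n d).
(* [pen] and [lst] are the coordinates n-2 and n-1, which carry [a]. *)
Local Notation pen := (inord m : 'I_n).
Local Notation lst := (ord_max : 'I_n).
Implicit Types (t v w x y z : vec n) (i j k : 'I_n).

Lemma val_pen : pen = m :> nat.
Proof. by rewrite inordK. Qed.

Lemma pen_neq_lst : pen != lst.
Proof. by rewrite -val_eqE /= val_pen; lia. Qed.

Lemma ord_tailP k : [\/ k < m, k = pen | k = lst].
Proof.
have := ltn_ord k; case: (ltngtP k m) => [km|mk|km] kn; first exact: Or31.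
- by apply: Or33; apply: val_inj => /=; lia.
- by apply: Or32; apply: val_inj; rewrite /= val_pen.
Qed.

Lemma avec_low k : k < m -> a k = 0.
Proof. by move=> km; rewrite ffunE; do 2?[case: ifP => [/eqP|_]; first lia]. Qed.

Lemma avec_pen : a pen = 1.
Proof. by rewrite ffunE val_pen eqxx. Qed.

Lemma avec_lst : a lst = d.-1.
Proof. by rewrite ffunE /= eqxx gtn_eqF. Qed.

Lemma sum_tail v : (forall k, k < m -> v k = 0) -> \sum_(k < n) v k = v pen + v lst.
Proof.
move=> low; rewrite (bigD1 pen) // (bigD1 lst) /=; last by rewrite eq_sym pen_neq_lst.
rewrite big1 ?addn0 // => k /andP[kpen klst]; apply: low.
by case: (ord_tailP k) => // ek; [rewrite ek eqxx in kpen | rewrite ek eqxx in klst].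
Qed.

Lemma inV_tail v : inV d v -> (forall k, k < m -> v k = 0) -> v pen + v lst = d.
Proof. by move=> <- /sum_tail. Qed.

Lemma eq_avec v : inV d v -> (forall k, k < m -> v k = 0) -> v pen = 1 -> v = a.
Proof.
move=> hv low vpen; have := inV_tail hv low; rewrite vpen => sum.
apply/ffunP => k; case: (ord_tailP k) => [km|->|->].
- by rewrite low // avec_low.
- by rewrite vpen avec_pen.
- by rewrite avec_lst -sum add1n.
Qed.

Lemma minimal2_last_support x t : minimal_chain d [:: x; t] -> x <> a -> t <> a ->
  (forall k, k != lst -> t k = 0) -> forall k, k != lst -> x k = 0.
Proof.
move=> mxt xa ta t0; case: (eqVneq x t) => [-> // | /eqP nxt].
case: (vlt_total nxt) => [[l [agree lt]] | ltx]; last by case: (minimal2_sorted mxt xa ta).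
have llst : l = lst by apply/eqP; apply: contraTT lt => /t0 ->.
move=> k klst; rewrite agree ?t0 // llst /=.
by have := ltn_ord k; move: klst; rewrite -val_eqE /=; lia.
Qed.

Lemma avec_shift_support t i j : i < j ->
  (forall k, t k + (k == i) - (k == j) = a k) ->
  i = pen /\ forall k, k != lst -> t k = 0.
Proof.
move=> ij ta; have nij := ord_ltn_eqF ij.
have ti := ta i; rewrite eqxx nij /= in ti.
have ipen : i = pen.
  case: (ord_tailP i) => [im|//|ilst]; first by move: ti; rewrite avec_low //; lia.
  by exfalso; move: ij; rewrite ilst /=; have := ltn_ord j; lia.
split=> // k klst; have := ta k.
case: (ord_tailP k) => [km|->|klst']; last by rewrite klst' eqxx in klst.
- have ki : k < i by rewrite ipen val_pen.
  by rewrite avec_low // !ord_ltn_eqF ?(ltn_trans ki ij) //= addn0 subn0.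
- by rewrite avec_pen -ipen eqxx nij /=; lia.
Qed.

Lemma minimal2_shift x t i j : minimal_chain d [:: x; t] -> x <> a -> t <> a ->
  i < j -> 0 < x i -> 0 < t j -> forall k, x k + (k == j) = a k + (k == i).
Proof.
move=> mxt xa ta ij xi tj; have [hx _] := minimal2_inV mxt.
have nij := ord_ltn_eqF ij.
pose p : vec n := [ffun k => x k + (k == j) - (k == i)].
pose q : vec n := [ffun k => t k + (k == i) - (k == j)].
have pq k : p k + q k = x k + t k.
  rewrite !ffunE; case: (eqVneq k j) => [->|_]; first by rewrite [j == i]eq_sym nij /=; lia.
  by case: (eqVneq k i) => [->|_] /=; lia.
have plx : vlt p x.
  exists i; split; last by rewrite ffunE eqxx nij /=; lia.
  move=> k ki; rewrite ffunE.
  by rewrite !ord_ltn_eqF ?addn0 ?subn0 //; apply: ltn_trans ij.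
case: (eqVneq p a) => [pa k | /eqP pa].
  have := congr1 (fun v : vec n => v k) pa; rewrite ffunE.
  by case: (k == j); case: (eqVneq k i) => [->|_] /=; lia.
case: (eqVneq q a) => [qa | /eqP qa];
  last by case: (minimal2_exchange mxt (inV_shift j hx xi) pa qa pq plx).
(* q = a would make t concentrated on [lst], forcing x to be as well *)
have [ipen t0] : i = pen /\ forall k, k != lst -> t k = 0.
  by apply: avec_shift_support ij _ => k; rewrite -qa ffunE.
move: xi; rewrite (minimal2_last_support mxt xa ta) ?ipen ?pen_neq_lst //.
Qed.

Lemma minimal2_unit_tail y z j : 2 <= d -> d <> 3 -> m <= j ->
  minimal_chain d [:: y; z] -> y <> a -> z <> a -> y j = 1 -> z j = 1 -> False.
Proof.
move=> d2 d3 mj myz ya za yj zj; have [hy _] := minimal2_inV myz.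
have [k kj yk] : exists2 k : 'I_n, k < j & 0 < y k.
  case: (boolP [exists k : 'I_n, (k < m) && (0 < y k)]) =>
    [/existsP[k /andP[km yk]] | /existsPn none].
    by exists k => //; apply: leq_trans mj.
  have low (k : 'I_n) : k < m -> y k = 0 by move=> km; move: (none k); rewrite km /=; lia.
  case: (ord_tailP j) => [|jpen|jlst]; first lia.
  - by case: ya; apply: eq_avec; rewrite // -jpen.
  - exists pen; first by rewrite jlst val_pen.
    by have := inV_tail hy low; rewrite -jlst yj; lia.
(* y_j + 1 = a_j, i.e. a_j = 2, which fails at [pen] and, as d <> 3, at [lst] *)
have := minimal2_shift myz ya za kj yk _ j; rewrite zj eqxx yj [j == k]eq_sym ord_ltn_eqF //.
by case: (ord_tailP j) => [|->|->]; rewrite ?avec_pen ?avec_lst; lia.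
Qed.

Section Gain.
Variables (x w : vec n) (i j : 'I_n).
Hypotheses (d2 : 2 <= d) (hw : inV d w) (wa : w <> a) (ij : i < j) (wi : w i < x i)
  (w_le : forall k, k != j -> w k <= x k)
  (shift : forall k, x k + (k == j) = a k + (k == i)).

Lemma gain_x_i : x i = a i + 1.
Proof. by have := shift i; rewrite eqxx ord_ltn_eqF //= addn0. Qed.

Lemma gain_x_j : x j + 1 = a j.
Proof. by have := shift j; rewrite eqxx [j == i]eq_sym ord_ltn_eqF //= addn0. Qed.

Lemma gain_x_off k : k != i -> k != j -> x k = a k.
Proof. by move=> /negbTE ki /negbTE kj; have := shift k; rewrite ki kj /= !addn0. Qed.

Lemma gain_i_neq_lst : i != lst.
Proof. by rewrite ord_ltn_eqF // (leq_trans ij) ?leq_ord. Qed.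

Lemma gain_tail : j = pen \/ j = lst.
Proof.
have := gain_x_j; case: (ord_tailP j) => [jm|->|->]; [|by left|by right].
by rewrite avec_low // addn1.
Qed.

Lemma gain_x_low k : k < i -> x k = 0.
Proof.
move=> ki; have km : k < m by move: ki ij; case: gain_tail => -> /=; rewrite ?val_pen; lia.
by rewrite gain_x_off ?avec_low ?ord_ltn_eqF //; apply: ltn_trans ij.
Qed.

Lemma gain_w_low k : k < m -> w k = 0.
Proof.
move=> km; have kj : k != j by case: gain_tail => ->; rewrite -val_eqE /= ?val_pen; lia.
case: (eqVneq k i) => [eki|ki].
  have im : i < m by rewrite -eki.
  by rewrite eki; move: wi; rewrite gain_x_i avec_low //; lia.
by have := w_le kj; rewrite gain_x_off // avec_low //; lia.
Qed.

Lemma gain_gap : x j + 2 <= w j.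
Proof.
have sum := inV_tail hw gain_w_low.
have wpen : w pen <> 1 by move=> /(eq_avec hw gain_w_low).
have xj := gain_x_j; case: gain_tail => jE; rewrite jE ?avec_pen ?avec_lst in xj *.
- have lst_ne : lst != j by rewrite jE eq_sym pen_neq_lst.
  have wlst : w lst <= d.-1.
    by rewrite -avec_lst -(@gain_x_off lst) ?w_le // eq_sym gain_i_neq_lst.
  lia.
- have wpen1 : w pen <= 1.
    case: (eqVneq i pen) => [ipen|ipen].
      by move: wi; rewrite gain_x_i ipen avec_pen; lia.
    have pen_ne : pen != j by rewrite jE pen_neq_lst.
    by rewrite -avec_pen -(@gain_x_off pen) ?w_le // eq_sym.
  lia.
Qed.

Lemma gain_exchange t : minimal_chain d [:: x; t] -> 2 <= t j -> False.
Proof.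
move=> mxt tj; have gap := gain_gap; have sum := inV_tail hw gain_w_low.
(* the smallest vector of V(n,d) that vanishes below j and has p_j = x_j + 2 *)
pose p : vec n :=
  [ffun k => if k == j then x j + 2 else if k == lst then d - (x j + 2) else 0].
have p_low k : k < j -> p k = 0.
  by move=> kj; rewrite ffunE !ord_ltn_eqF // (leq_trans kj (leq_ord j)).
have mj : m <= j by case: gain_tail => ->; rewrite ?val_pen.
apply: (minimal2_exchange_tail mxt (p := p) (i := i)).
- rewrite /inV sum_tail => [|k km]; last by apply: p_low; apply: leq_trans mj.
  have xj := gain_x_j; rewrite !ffunE; case: gain_tail => jE; rewrite jE in xj gap *.
  + by rewrite !eqxx [lst == _]eq_sym (negbTE pen_neq_lst); lia.
  + by rewrite !eqxx (negbTE pen_neq_lst) avec_lst in xj *; lia.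
- move/(congr1 (fun v : vec n => v pen)); rewrite ffunE avec_pen.
  by case: gain_tail => ->; rewrite ?eqxx ?(negbTE pen_neq_lst); lia.
- move=> k; rewrite ffunE; case: (eqVneq k j) => [->|kj]; first lia.
  case: (eqVneq k lst) => [klst|_ //]; rewrite klst in kj *.
  have ilst : lst != i by rewrite eq_sym gain_i_neq_lst.
  by rewrite (gain_x_off ilst kj) avec_lst; lia.
- by move=> k ki; apply: p_low; apply: leq_ltn_trans ij.
- exact: @gain_x_low.
- by rewrite gain_x_i addn1.
Qed.

End Gain.

Lemma minimal3_head x y z w : 2 <= d -> d <> 3 -> x <> a -> y <> a -> z <> a ->
  minimal_chain d [:: x; y] -> minimal_chain d [:: y; z] ->
  minimal_chain d [:: x; z] -> inV d w -> w <> a ->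
  (forall k, w k <= x k + y k + z k) -> ~ vlt w x.
Proof.
move=> d2 d3 xa ya za mxy myz mxz hw wa w_le [i [agree wi]].
have [hx _] := minimal2_inV mxy; have xi : 0 < x i by lia.
have shift j : i < j -> x j < w j -> forall k, x k + (k == j) = a k + (k == i).
  move=> ij xwj; case: (posnP (y j)) => [y0|yj]; last exact: minimal2_shift mxy xa ya ij xi yj.
  by apply: minimal2_shift mxz xa za ij xi _; have := w_le j; lia.
have [j ij xwj] := exists_gt hw hx agree wi.
have shj := shift j ij xwj.
have w_le_x k : k != j -> w k <= x k.
  move=> kj; case: (ltngtP k i) => [ki|ik|/val_inj ->]; [by rewrite agree | | exact: ltnW].
  rewrite leqNgt; apply/negP => xwk; have := shift k ik xwk j; have := shj j.
  by rewrite eqxx [j == k]eq_sym (negbTE kj) [j == i]eq_sym ord_ltn_eqF //=; lia.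
have gap := gain_gap d2 hw wa ij wi w_le_x shj.
have exch := gain_exchange d2 hw wa ij wi w_le_x shj.
have mj : m <= j by case: (gain_tail ij shj) => ->; rewrite ?val_pen.
have := w_le j; case: (leqP 2 (y j)) => [/(exch y mxy) // | y1].
case: (leqP 2 (z j)) => [/(exch z mxz) // | z1] => links.
by apply: (minimal2_unit_tail d2 d3 mj myz ya za); lia.
Qed.

End Tail.

Theorem lemma2p6 (n d : nat) (x y z : vec n) :
  (2 <= n)%N -> (2 <= d)%N -> d <> 3 ->
  inV d x -> x <> avec n d ->
  inV d y -> y <> avec n d ->
  inV d z -> z <> avec n d ->
  minimal_chain d [:: x; y] ->
  minimal_chain d [:: y; z] ->
  minimal_chain d [:: x; z] ->
  minimal_chain d [:: x; y; z].
Proof.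
case: n x y z => [|[|m]] // x y z _ d2 d3 hx xa _ ya _ za mxy myz mxz.
apply: minimal_chain_cons => // [|v w [_ in_vw] sum vw_free].
  by rewrite !inE !negb_or !(eq_sym (avec _ d)); apply/and3P; split; apply/eqP.
apply: (minimal3_head d2 d3 xa ya za mxy myz mxz).
- by apply: in_vw; rewrite inE eqxx.
- by move=> e; move: vw_free; rewrite inE e eqxx.
- move=> k; have := congr1 (fun f : vec m.+2 => f k) sum.
  by rewrite /= !chain_sum_cons [chain_sum [::] _]ffunE big_nil; lia.
Qed.
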